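(* Fix a monomial order on $S$. Let $J$ be an ideal of $S$ and let $(E_i)_{i\in\Lambda}$ be an arbitrary (nonempty) family of monomial ideals of $S$ such that $(J,E_i)$ is a G-nice pair for every $i\in\Lambda$. Put $E=\bigcap_{i\in\Lambda}E_i$. Then $(J,E)$ is a G-nice pair and $\bigcap_{i\in\Lambda}(J+E_i)=J+E$. Moreover, if $\mathcal G_J$ is a Gröbner basis of $J$, then $\mathcal G_J\cup G(E)$ is a Gröbner basis of $\bigcap_{i\in\Lambda}(J+E_i)$.
   Context: $K$ is a field and $S=K[x_1,\ldots,x_n]$ with a fixed monomial order. For $0\neq f\in S$, $\mathrm{in}(f)$ denotes its leading monomial; for an ideal $I$, $\mathrm{in}(I)$ is the ideal generated by the leading monomials of the nonzero elements of $I$. A pair $(J,E)$ of ideals of $S$ is called Gröbner nice (G-nice) if $\mathrm{in}(J+E)=\mathrm{in}(J)+\mathrm{in}(E)$. For a monomial ideal $E$, $G(E)$ denotes its unique minimal set of monomial generators. *)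

From HB Require Import structures.
From mathcomp Require Import all_boot all_algebra.
From mathcomp Require Import mpoly.
Set Implicit Arguments. Unset Strict Implicit. Unset Printing Implicit Defensive.
Import GRing.Theory.
Local Open Scope ring_scope.

Section GNice.
Variables (K : fieldType) (n : nat).
Local Notation S := {mpoly K[n]}.
Local Notation mon := 'X_{1..n}.

Definition pset := S -> Prop.
Definition pset_eq (A B : pset) : Prop := forall f, A f <-> B f.

Definition monomial_order (ord : rel mon) : Prop :=
  [/\ reflexive ord, antisymmetric ord, transitive ord, total ord &
      (forall m, ord mnm0 m)] /\
      (forall m1 m2 m3, ord m1 m2 -> ord (mnm_add m1 m3) (mnm_add m2 m3)).

Definition is_ideal (I : pset) : Prop :=
  [/\ I 0, (forall f g, I f -> I g -> I (f + g)) & (forall f g, I g -> I (f * g))].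

Definition ideal_gen (A : pset) : pset :=
  fun f => forall I, is_ideal I -> (forall a, A a -> I a) -> I f.

Definition monos (M : mon -> Prop) : pset := fun p => exists2 m, M m & p = 'X_[m].

Definition monomial_ideal (E : pset) : Prop :=
  exists M : mon -> Prop, pset_eq E (ideal_gen (monos M)).

Definition ideal_sum (J E : pset) : pset :=
  fun h => exists f g, [/\ J f, E g & h = f + g].

Definition ideal_bigcap (L : Type) (E : L -> pset) : pset := fun f => forall i, E i f.

Definition pset_union (A B : pset) : pset := fun f => A f \/ B f.

Definition is_lead_mon (ord : rel mon) (f : S) (m : mon) : Prop :=
  m \in msupp f /\ forall m', m' \in msupp f -> ord m' m.

Definition lead_mons (ord : rel mon) (A : pset) : pset :=
  fun p => exists f m, [/\ A f, f != 0, is_lead_mon ord f m & p = 'X_[m]].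

Definition init_ideal (ord : rel mon) (I : pset) : pset := ideal_gen (lead_mons ord I).

Definition G_nice (ord : rel mon) (J E : pset) : Prop :=
  pset_eq (init_ideal ord (ideal_sum J E))
          (ideal_sum (init_ideal ord J) (init_ideal ord E)).

Definition min_gens (E : pset) : pset :=
  monos (fun m => E 'X_[m] /\ forall m', E 'X_[m'] -> lem m' m -> m' = m).

Definition pset_finite (A : pset) : Prop := exists s : seq S, forall f, A f <-> f \in s.

Definition groebner_basis (ord : rel mon) (I G : pset) : Prop :=
  [/\ pset_finite G, (forall g, G g -> I g) &
      pset_eq (init_ideal ord I) (ideal_gen (lead_mons ord G))].

End GNice.

From HB Require Import structures.
From mathcomp Require Import all_boot all_algebra.
From mathcomp Require Import mpoly.
From Stdlib Require Import Classical ClassicalEpsilon.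

(* The argument rests on two
   classical facts about monomials, proved first:
   - Dickson's lemma: every set of monomials has a finite subset such that
     each element of the set is divisible by one of them.  It gives the
     well-foundedness of a monomial order and the finiteness of G(E).
   - Normal forms: every f is congruent modulo J to a polynomial none of
     whose monomials lies in in(J) (reduction, terminating by well-foundedness).
   An ideal is "monomially closed" when membership is decided monomial by
   monomial; monomial ideals, initial ideals and intersections of those are.
   The key lemma says: if (J, E) is G-nice, E monomial, and r is in J + E
   with no monomial in in(J), then r is in E.  The three claims follow:
   G-niceness of (J, E) by inspecting leading monomials, the equality
   ∩ (J + E i) = J + E by applying the key lemma to a normal form, and the
   Gröbner basis statement from G-niceness and the minimal generators of E. *)

Set Implicit Arguments. Unset Strict Implicit. Unset Printing Implicit Defensive.

Section Dickson.
Variable n : nat.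
Local Notation mon := 'X_{1..n}.

Definition le_prefix k (m1 m2 : mon) := forall i : 'I_n, i < k -> m1 i <= m2 i.

Definition dickson_prefix k := forall A : mon -> Prop, exists F : seq mon,
  (forall f, f \in F -> A f) /\ (forall a, A a -> exists2 f, f \in F & le_prefix k f a).

Lemma dickson_prefix0 : dickson_prefix 0.
Proof.
move=> A; case: (classic (exists a, A a)) => [[a Aa]|noA].
- exists [:: a]; split; first by move=> f; rewrite mem_seq1 => /eqP ->.
  by move=> a' _; exists a; rewrite ?mem_seq1.
- by exists [::]; split => // a Aa; case: noA; exists a.
Qed.

Section DicksonStep.
Variable k : nat.
Hypothesis dickson_k : dickson_prefix k.
Hypothesis lt_k_n : k < n.
Let ik : 'I_n := Ordinal lt_k_n.

Lemma le_prefixS f a : le_prefix k f a -> f ik <= a ik -> le_prefix k.+1 f a.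
Proof.
move=> le le_ik i; rewrite ltnS leq_eqVlt => /orP [/eqP eq_i|]; last exact: le.
by have -> : i = ik by apply: val_inj.
Qed.

(* The elements of A whose k-th exponent is below c: there the k-th coordinate
   takes finitely many values, each value class being handled by Dickson on k. *)
Lemma dickson_layers (A : mon -> Prop) c : exists G : seq mon,
  (forall f, f \in G -> A f) /\
  (forall a, A a -> a ik < c -> exists2 f, f \in G & le_prefix k.+1 f a).
Proof.
elim: c => [|c [G [GA Gdom]]]; first by exists [::].
have [F [FA Fdom]] := dickson_k (fun a => A a /\ a ik = c).
exists (G ++ F); split.
- by move=> f; rewrite mem_cat => /orP [/GA|/FA []].
- move=> a Aa; rewrite ltnS leq_eqVlt => /orP [/eqP a_c|a_lt].
  + have [f Ff le] := Fdom a (conj Aa a_c); exists f; first by rewrite mem_cat Ff orbT.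
    by apply: le_prefixS => //; have [_ ->] := FA f Ff; rewrite a_c.
  + by have [f Gf le] := Gdom a Aa a_lt; exists f; rewrite ?mem_cat ?Gf.
Qed.

(* Elements with a large k-th exponent are dominated by the basis F0 for k
   variables; the others by the finitely many layers below the bound b. *)
Lemma dickson_prefix_step : dickson_prefix k.+1.
Proof.
move=> A; have [F0 [F0A F0dom]] := dickson_k A.
pose b := \max_(f <- F0) f ik.
have [G [GA Gdom]] := dickson_layers A b.
exists (F0 ++ G); split.
- by move=> f; rewrite mem_cat => /orP [/F0A|/GA].
- move=> a Aa; case: (ltnP (a ik) b) => a_b.
  + by have [f Gf le] := Gdom a Aa a_b; exists f; rewrite ?mem_cat ?Gf ?orbT.
  + have [f F0f le] := F0dom a Aa; exists f; first by rewrite mem_cat F0f.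
    apply: le_prefixS => //; apply: leq_trans a_b.
    exact: (leq_bigmax_seq (P := xpredT) (F := fun f : mon => f ik) f F0f).
Qed.

End DicksonStep.

Lemma dickson_prefixS k : dickson_prefix k -> dickson_prefix k.+1.
Proof.
move=> dickson_k; case: (ltnP k n) => [lt_k_n|le_n_k]; first exact: dickson_prefix_step.
move=> A; have [F [FA Fdom]] := dickson_k A; exists F; split => // a /Fdom [f Ff le].
by exists f => // i lt_i; apply: le; apply: leq_trans (ltn_ord i) le_n_k.
Qed.

Lemma dickson (A : mon -> Prop) : exists F : seq mon,
  (forall f, f \in F -> A f) /\ (forall a, A a -> exists2 f, f \in F & (f <= a)%MM).
Proof.
have dickson_all k : dickson_prefix k by elim: k => [|k]; [exact: dickson_prefix0|exact: dickson_prefixS].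
have [F [FA Fdom]] := dickson_all n A; exists F; split => // a /Fdom [f Ff le].
by exists f => //; apply/mnm_lepP => i; apply: le.
Qed.

End Dickson.

Import GRing.Theory.
Local Open Scope ring_scope.

Definition decide (P : Prop) : bool := if excluded_middle_informative P then true else false.

Lemma decideP (P : Prop) : reflect P (decide P).
Proof. by rewrite /decide; case: excluded_middle_informative => H; constructor. Qed.

Section Ideals.
Variables (K : fieldType) (n : nat).
Local Notation S := {mpoly K[n]}.
Local Notation mon := 'X_{1..n}.
Implicit Types (I A B E : pset K n) (f g h : S) (m : mon).

Lemma ideal0 I : is_ideal I -> I 0.
Proof. by case. Qed.

Lemma idealD I f g : is_ideal I -> I f -> I g -> I (f + g).
Proof. by case=> _ addI _; apply: addI. Qed.

Lemma idealM I f g : is_ideal I -> I g -> I (f * g).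
Proof. by case=> _ _ mulI; apply: mulI. Qed.

Lemma idealB I f g : is_ideal I -> I f -> I g -> I (f - g).
Proof. by move=> idI If Ig; apply: idealD; rewrite // -mulN1r; apply: idealM. Qed.

Lemma idealZ I c f : is_ideal I -> I f -> I (c *: f).
Proof. by move=> idI If; rewrite -mul_mpolyC; apply: idealM. Qed.

Lemma ideal_of_monos I f : is_ideal I -> (forall m, m \in msupp f -> I 'X_[m]) -> I f.
Proof.
move=> idI If; rewrite [f]mpolyE big_seq; apply: big_ind.
- exact: ideal0.
- by move=> ? ?; apply: idealD.
- by move=> m /If; apply: idealZ.
Qed.

Lemma ideal_monoM I m0 m : is_ideal I -> I 'X_[m0] -> (m0 <= m)%MM -> I 'X_[m].
Proof. by move=> idI Im0 le; rewrite -(submK le) mpolyXD; apply: idealM. Qed.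

Lemma ideal_gen_ideal A : is_ideal (ideal_gen A).
Proof.
split.
- by move=> I [I0 _ _] _.
- by move=> f g Af Ag I idI AI; apply: idealD; [|apply: Af|apply: Ag].
- by move=> f g Ag I idI AI; apply: idealM; [|apply: Ag].
Qed.

Lemma ideal_gen_sub A f : A f -> ideal_gen A f.
Proof. by move=> Af I _; apply. Qed.

Lemma ideal_gen_min A I : is_ideal I -> (forall a, A a -> I a) ->
  forall f, ideal_gen A f -> I f.
Proof. by move=> idI AI f; apply. Qed.

Lemma ideal_gen_mono A B : (forall a, A a -> B a) -> forall f, ideal_gen A f -> ideal_gen B f.
Proof.
move=> AB; apply: ideal_gen_min; first exact: ideal_gen_ideal.
by move=> a /AB; apply: ideal_gen_sub.
Qed.

Lemma ideal_gen_ext A B : pset_eq A B -> pset_eq (ideal_gen A) (ideal_gen B).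
Proof. by move=> eqAB f; split; apply: ideal_gen_mono => a; rewrite eqAB. Qed.

Definition mdiv (M : mon -> Prop) m := exists2 m0, M m0 & (m0 <= m)%MM.

Lemma ideal_gen_monosP (M : mon -> Prop) f :
  ideal_gen (monos M) f <-> forall m, m \in msupp f -> mdiv M m.
Proof.
split.
- apply: (@ideal_gen_min _ (fun g => forall m, m \in msupp g -> mdiv M m)); last first.
    move=> a [m0 Mm0 ->] m; rewrite msuppX mem_seq1 => /eqP ->.
    by exists m0 => //; apply: lepm_refl.
  split.
  + by move=> m; rewrite msupp0.
  + by move=> f1 g1 H1 H2 m /msuppD_le; rewrite mem_cat => /orP [/H1|/H2].
  + move=> f1 g1 H2 m /msuppM_le /allpairsP [[m1 m2]] /= [_ /H2 [m0 Mm0 le] ->].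
    by exists m0 => //; apply: lepm_trans le _; apply: lem_addl.
- move=> Hf; apply: ideal_of_monos; first exact: ideal_gen_ideal.
  move=> m /Hf [m0 Mm0 le]; apply: ideal_monoM le; first exact: ideal_gen_ideal.
  by apply: ideal_gen_sub; exists m0.
Qed.

(* Monomially closed sets: membership is decided monomial by monomial.  This
   is the property of monomial ideals actually used below. *)
Definition mono_closed E := forall f, E f <-> forall m, m \in msupp f -> E 'X_[m].

Lemma mono_closed_gen (M : mon -> Prop) : mono_closed (ideal_gen (monos M)).
Proof.
move=> f; rewrite ideal_gen_monosP; split => Hf m Hm.
- by apply/ideal_gen_monosP => m'; rewrite msuppX mem_seq1 => /eqP ->; apply: Hf.
- by move/ideal_gen_monosP: (Hf m Hm); apply; rewrite msuppX mem_seq1.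
Qed.

Lemma mono_closed_ext A B : pset_eq A B -> mono_closed A -> mono_closed B.
Proof.
move=> eqAB closedA f; rewrite -eqAB closedA.
by split => Hf m /Hf; rewrite eqAB.
Qed.

Lemma monomial_ideal_closed E : monomial_ideal E -> mono_closed E.
Proof. by case=> M eqM; apply: mono_closed_ext (mono_closed_gen M) => f; rewrite eqM. Qed.

Lemma bigcap_ideal (L : Type) (E : L -> pset K n) :
  (forall i, is_ideal (E i)) -> is_ideal (ideal_bigcap E).
Proof.
move=> idE; split.
- by move=> i; apply: ideal0.
- by move=> f g Ef Eg i; apply: idealD.
- by move=> f g Eg i; apply: idealM.
Qed.

Lemma bigcap_mono_closed (L : Type) (E : L -> pset K n) :
  (forall i, mono_closed (E i)) -> mono_closed (ideal_bigcap E).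
Proof.
move=> closedE f; split.
- by move=> Ef m Hm i; move/closedE: (Ef i); apply.
- by move=> Ef i; apply/closedE => m Hm; apply: Ef.
Qed.

Lemma ideal_sum_ideal A B : is_ideal A -> is_ideal B -> is_ideal (ideal_sum A B).
Proof.
move=> idA idB; split.
- by exists 0, 0; rewrite addr0; split => //; apply: ideal0.
- move=> _ _ [a [b [Aa Bb ->]]] [a' [b' [Aa' Bb' ->]]].
  by exists (a + a'), (b + b'); rewrite addrACA; split => //; apply: idealD.
- move=> f _ [a [b [Aa Bb ->]]].
  by exists (f * a), (f * b); rewrite mulrDr; split => //; apply: idealM.
Qed.

Lemma ideal_sum_l A B f : is_ideal B -> A f -> ideal_sum A B f.
Proof. by move=> idB Af; exists f, 0; rewrite addr0; split => //; apply: ideal0. Qed.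

Lemma ideal_sum_r A B f : is_ideal A -> B f -> ideal_sum A B f.
Proof. by move=> idA Bf; exists 0, f; rewrite add0r; split => //; apply: ideal0. Qed.

Lemma msupp_sumX_le (s : seq mon) (b : pred mon) (c : mon -> K) :
  {subset msupp (\sum_(m <- s | b m) c m *: ('X_[m] : S)) <= [seq m <- s | b m]}.
Proof.
move=> m /msupp_sum_le /flatten_mapP [m' Hm'] /msuppZ_le.
by rewrite msuppX mem_seq1 => /eqP ->.
Qed.

Lemma split_poly (P : mon -> Prop) f : exists p q, [/\ f = p + q,
  (forall m, m \in msupp p -> P m /\ m \in msupp f) &
  (forall m, m \in msupp q -> ~ P m /\ m \in msupp f)].
Proof.
pose b m := decide (P m).
exists (\sum_(m <- msupp f | b m) f@_m *: 'X_[m]).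
exists (\sum_(m <- msupp f | ~~ b m) f@_m *: 'X_[m]); split.
- by rewrite {1}[f]mpolyE (bigID b).
- by move=> m /msupp_sumX_le; rewrite mem_filter => /andP [/decideP].
- by move=> m /msupp_sumX_le; rewrite mem_filter => /andP [/decideP].
Qed.

Lemma sum_monoP A B m : mono_closed A -> mono_closed B ->
  ideal_sum A B 'X_[m] -> A 'X_[m] \/ B 'X_[m].
Proof.
move=> closedA closedB [a [b [Aa Bb eq_ab]]].
have : m \in msupp (a + b) by rewrite -eq_ab msuppX mem_seq1.
move/msuppD_le; rewrite mem_cat => /orP [ma|mb].
- by left; move/closedA: Aa; apply.
- by right; move/closedB: Bb; apply.
Qed.

Lemma sum_of_monos A B f : mono_closed A -> mono_closed B -> is_ideal A -> is_ideal B ->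
  (forall m, m \in msupp f -> A 'X_[m] \/ B 'X_[m]) -> ideal_sum A B f.
Proof.
move=> closedA closedB idA idB ABf.
have [p [q [eq_pq Hp Hq]]] := split_poly (fun m => A 'X_[m]) f.
exists p, q; split => //.
- by apply/closedA => m /Hp [].
- by apply/closedB => m /Hq [notA /ABf [/notA|]].
Qed.

End Ideals.

Section InitialIdeals.
Variables (K : fieldType) (n : nat) (ord : rel 'X_{1..n}).
Hypothesis ord_refl : reflexive ord.
Local Notation S := {mpoly K[n]}.
Local Notation mon := 'X_{1..n}.
Implicit Types (I E : pset K n) (f g h : S) (m : mon).

Definition lead_of I m := exists f, [/\ I f, f != 0 & is_lead_mon ord f m].

Lemma init_ideal_monos I : pset_eq (init_ideal ord I) (ideal_gen (monos (lead_of I))).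
Proof.
apply: ideal_gen_ext => p; split.
- by case=> f [m [If nz lead_f ->]]; exists m => //; exists f.
- by case=> m [f [If nz lead_f]] ->; exists f, m.
Qed.

Lemma init_ideal_ideal I : is_ideal (init_ideal ord I).
Proof. exact: ideal_gen_ideal. Qed.

Lemma init_mono_closed I : mono_closed (init_ideal ord I).
Proof. by apply: mono_closed_ext (mono_closed_gen (lead_of I)) => f; rewrite init_ideal_monos. Qed.

Lemma init_monoP I m : init_ideal ord I 'X_[m] <-> mdiv (lead_of I) m.
Proof.
rewrite init_ideal_monos ideal_gen_monosP msuppX; split => [|Hm m']; first by apply; rewrite mem_seq1.
by rewrite mem_seq1 => /eqP ->.
Qed.

Lemma init_sub I I' : (forall f, I f -> I' f) -> forall f, init_ideal ord I f -> init_ideal ord I' f.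
Proof. by move=> II'; apply: ideal_gen_mono => p [f [m [/II' I'f nz lead_f ->]]]; exists f, m. Qed.

Lemma init_ext I I' : pset_eq I I' -> pset_eq (init_ideal ord I) (init_ideal ord I').
Proof. by move=> eqII' f; split; apply: init_sub => g; rewrite eqII'. Qed.

Lemma X_neq0 m : ('X_[m] : S) != 0.
Proof. by rewrite -msupp_eq0 msuppX. Qed.

Lemma lead_X m : is_lead_mon ord ('X_[m] : S) m.
Proof. by split; rewrite ?msuppX ?mem_seq1 // => m'; rewrite mem_seq1 => /eqP ->. Qed.

Lemma lead_in_init I f m : I f -> f != 0 -> is_lead_mon ord f m -> init_ideal ord I 'X_[m].
Proof. by move=> If nz lead_f; apply: ideal_gen_sub; exists f, m. Qed.

Lemma mono_in_init I m : I 'X_[m] -> init_ideal ord I 'X_[m].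
Proof. by move=> Im; apply: (lead_in_init Im (X_neq0 m) (lead_X m)). Qed.

Lemma init_mono_closed_ideal E m : is_ideal E -> mono_closed E ->
  init_ideal ord E 'X_[m] -> E 'X_[m].
Proof.
move=> idE closedE /init_monoP [m0 [e [Ee _ [m0e _]]] le].
by apply: ideal_monoM le => //; move/closedE: Ee; apply.
Qed.

End InitialIdeals.

Section MonomialOrders.
Variables (n : nat) (ord : rel 'X_{1..n}).
Hypothesis Hord : monomial_order ord.
Local Notation mon := 'X_{1..n}.
Implicit Types (m : mon).

Lemma ord_refl : reflexive ord. Proof. by case: Hord => -[]. Qed.
Lemma ord_anti : antisymmetric ord. Proof. by case: Hord => -[]. Qed.
Lemma ord_trans : transitive ord. Proof. by case: Hord => -[]. Qed.
Lemma ord_total : total ord. Proof. by case: Hord => -[]. Qed.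

Lemma ord_addr m1 m2 m3 : ord m1 m2 -> ord (m1 + m3)%MM (m2 + m3)%MM.
Proof. by case: Hord => _; apply. Qed.

Lemma ord_lem m1 m2 : (m1 <= m2)%MM -> ord m1 m2.
Proof.
move=> le; rewrite -(submK le); have ord0 : ord 0%MM (m2 - m1)%MM by case: Hord => -[].
by have := ord_addr m1 ord0; rewrite add0m.
Qed.

Lemma seq_max (R : rel mon) (P : mon -> Prop) (s : seq mon) : total R -> transitive R ->
  (forall y, y \in s -> ~ P y) \/
  exists x, [/\ x \in s, P x & forall y, y \in s -> P y -> R y x].
Proof.
move=> totR trR; elim: s => [|a s IH]; first by left.
have Raa : R a a by case/orP: (totR a a).
case: (classic (P a)) => [Pa|notPa]; last first.
  case: IH => [noP|[x [xs Px maxx]]].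
  - by left => y; rewrite in_cons => /orP [/eqP ->|/noP].
  - right; exists x; split; rewrite ?in_cons ?xs ?orbT //.
    by move=> y; rewrite in_cons => /orP [/eqP ->|/maxx].
have max_a (s' : seq mon) : (forall y, y \in s' -> P y -> R y a) ->
    exists x, [/\ x \in a :: s', P x & forall y, y \in a :: s' -> P y -> R y x].
  move=> maxa; exists a; split; rewrite ?mem_head //.
  by move=> y; rewrite in_cons => /orP [/eqP ->|/maxa].
right; case: IH => [noP|[x [xs Px maxx]]].
- by apply: max_a => y /noP.
- case/orP: (totR a x) => [Rax|Rxa]; last by apply: max_a => y ys /(maxx y ys) Ryx; apply: trR Rxa.
  exists x; split; rewrite ?in_cons ?xs ?orbT //.
  by move=> y; rewrite in_cons => /orP [/eqP ->|/maxx].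
Qed.

Definition olt m1 m2 := ord m1 m2 /\ m1 <> m2.

(* A monomial order is a well-order: a minimal element of a finite Dickson
   basis of the non-accessible monomials would be accessible. *)
Lemma olt_wf : well_founded olt.
Proof.
move=> m; apply: NNPP => not_acc_m.
have [F [FA Fdom]] := dickson (fun x => ~ Acc olt x).
have totR : total (fun a b => ord b a) by move=> a b; rewrite orbC ord_total.
have trR : transitive (fun a b => ord b a) by move=> a b c H1 H2; apply: ord_trans H2 H1.
case: (seq_max (fun x => ~ Acc olt x) F totR trR) => [noF|[f [Ff not_acc_f minf]]].
  by have [f Ff _] := Fdom m not_acc_m; apply: (noF f Ff); apply: FA.
apply: not_acc_f; constructor => y [ord_yf ne_yf]; apply: NNPP => not_acc_y.
have [f' Ff' le] := Fdom y not_acc_y.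
have ord_ff' : ord f f' by apply: minf => //; apply: FA.
by apply: ne_yf; apply: ord_anti; rewrite ord_yf (ord_trans ord_ff' (ord_lem le)).
Qed.

End MonomialOrders.

Section NormalForms.
Variables (K : fieldType) (n : nat) (ord : rel 'X_{1..n}).
Hypothesis Hord : monomial_order ord.
Local Notation S := {mpoly K[n]}.
Local Notation mon := 'X_{1..n}.
Implicit Types (f g : S) (m : mon).

Lemma lead_exists f : f != 0 -> exists m, is_lead_mon ord f m.
Proof.
rewrite -msupp_eq0 => nz.
case: (seq_max (fun _ => True) (msupp f) (ord_total Hord) (ord_trans Hord)) => [noP|[x [xf _ maxx]]].
  by move: nz; case: (msupp f) noP => // a s noP; case: (noP a); rewrite ?mem_head.
by exists x; split => // y yf; apply: maxx.
Qed.

Variable J : pset K n.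
Hypothesis HJ : is_ideal J.

Let nonstd m := init_ideal ord J 'X_[m].

Definition max_nonstd g m :=
  [/\ m \in msupp g, nonstd m & forall m', m' \in msupp g -> nonstd m' -> ord m' m].

Definition has_normal_form g :=
  exists j, J j /\ forall m, m \in msupp (g - j) -> ~ nonstd m.

Lemma max_nonstd_or_none g :
  has_normal_form g \/ exists m, max_nonstd g m.
Proof.
case: (seq_max nonstd (msupp g) (ord_total Hord) (ord_trans Hord)) => [std|[m [mg nm maxm]]].
- by left; exists 0; rewrite subr0; split => //; apply: ideal0.
- by right; exists m.
Qed.

(* One reduction step: subtracting a suitable multiple of an element of J
   whose leading monomial divides mt cancels mt and only introduces smaller
   monomials. *)
Lemma reduce_step g mt : max_nonstd g mt ->
  exists j, J j /\ forall m, m \in msupp (g - j) -> nonstd m -> olt ord m mt.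
Proof.
case=> mtg nmt maxmt.
have [m0 [h [Jh nzh [m0h leadh]]] le] := (init_monoP _ _ _).1 nmt.
set d := (mt - m0)%MM; have Ed : (d + m0)%MM = mt by rewrite submK.
pose c := g@_mt / h@_m0.
exists (c *: (h * 'X_[d])); split; first by apply: idealZ => //; rewrite mulrC; apply: idealM.
have hm0 : h@_m0 != 0 by rewrite -mcoeff_msupp.
have coef0 : (g - c *: (h * 'X_[d]))@_mt = 0.
  by rewrite mcoeffB mcoeffZ -Ed mcoeffMX Ed /c divfK // subrr.
move=> m mr nm; split; last by move=> eq_m; move: mr; rewrite eq_m mcoeff_msupp coef0 eqxx.
move/msuppB_le: mr; rewrite mem_cat => /orP [mg|/msuppZ_le]; first exact: maxmt.
rewrite (perm_mem (msuppMX _ _)) => /mapP [m' m'h ->].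
by rewrite -Ed addmC [(d + m0)%MM]addmC; apply: ord_addr => //; apply: leadh.
Qed.

(* Reduction terminates, by well-founded induction on the largest
   non-standard monomial. *)
Lemma normal_form_max m : forall g, max_nonstd g m -> has_normal_form g.
Proof.
elim: (olt_wf Hord m) => {}m _ IH g maxg.
have [j1 [Jj1 lt1]] := reduce_step maxg.
case: (max_nonstd_or_none (g - j1)) => [[j2 [Jj2 std]]|[m' maxg']].
  by exists (j1 + j2); split; [apply: idealD|rewrite opprD addrA].
have [m'g nm' _] := maxg'.
have [j2 [Jj2 std]] := IH m' (lt1 m' m'g nm') _ maxg'.
by exists (j1 + j2); split; [apply: idealD|rewrite opprD addrA].
Qed.

Lemma normal_form g : has_normal_form g.
Proof. by case: (max_nonstd_or_none g) => [//|[m /normal_form_max]]. Qed.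

End NormalForms.

Section MinimalGenerators.
Variables (K : fieldType) (n : nat).
Local Notation S := {mpoly K[n]}.
Local Notation mon := 'X_{1..n}.
Implicit Types (E : pset K n) (m : mon).

Lemma mdeg_lt_lem m1 m2 : (m1 <= m2)%MM -> m1 <> m2 -> (mdeg m1 < mdeg m2)%N.
Proof.
move=> le ne; rewrite -(submK le) mdegD -[X in (X < _)%N]add0n ltn_add2r lt0n mdeg_eq0.
by apply: contra_notN ne => /eqP eq0; rewrite -(submK le) eq0 add0m.
Qed.

Lemma minimal_divisor (P : mon -> Prop) m : P m ->
  exists m1, [/\ P m1, (m1 <= m)%MM & forall m', P m' -> (m' <= m1)%MM -> m' = m1].
Proof.
move: {2}(mdeg m).+1 (ltnSn (mdeg m)) => k; elim: k m => // k IH m lt_k Pm.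
case: (classic (exists m', [/\ P m', (m' <= m)%MM & m' <> m])) => [[m' [Pm' le ne]]|minm].
- have lt_m' : (mdeg m' < k)%N := leq_trans (mdeg_lt_lem le ne) lt_k.
  have [m1 [Pm1 le1 min1]] := IH m' lt_m' Pm'.
  by exists m1; split => //; apply: lepm_trans le1 le.
- exists m; split => //; first exact: lepm_refl.
  by move=> m' Pm' le; apply: NNPP => ne; apply: minm; exists m'.
Qed.

Lemma min_gens_finite E : pset_finite (min_gens E).
Proof.
have [F [FE Fdom]] := dickson (fun m => E 'X_[m]).
exists [seq x <- map (fun m => 'X_[m] : S) F | decide (min_gens E x)] => f.
rewrite mem_filter; split => [Gf|/andP [/decideP //]].
rewrite (introT (decideP _) Gf) /=; case: Gf => m [Em minm] ->.
have [f0 Ff0 le] := Fdom m Em.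
by rewrite -(minm f0 (FE f0 Ff0) le); apply: map_f.
Qed.

Lemma pset_finite_union (A B : pset K n) :
  pset_finite A -> pset_finite B -> pset_finite (pset_union A B).
Proof.
case=> [s sA] [t tB]; exists (s ++ t) => f.
by rewrite mem_cat /pset_union sA tB; split => /orP.
Qed.

End MinimalGenerators.

Section GNicePairs.
Variables (K : fieldType) (n : nat) (ord : rel 'X_{1..n}).
Hypothesis Hord : monomial_order ord.
Local Notation S := {mpoly K[n]}.
Local Notation mon := 'X_{1..n}.
Implicit Types (E : pset K n) (f g r : S) (m : mon).
Variable J : pset K n.
Hypothesis HJ : is_ideal J.

Lemma init_sum_monoP E m : is_ideal E -> mono_closed E -> G_nice ord J E ->
  init_ideal ord (ideal_sum J E) 'X_[m] -> init_ideal ord J 'X_[m] \/ E 'X_[m].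
Proof.
move=> idE closedE nice /nice /sum_monoP.
case=> [||inJ|/(init_mono_closed_ideal idE closedE)]; by [apply: init_mono_closed|left|right].
Qed.

(* Key lemma: an element of J + E supported on standard monomials of J lies
   in E.  Its part outside E is in J + E; were it nonzero, its leading
   monomial would be in in(J) or in E, both excluded. *)
Lemma standard_in_companion E r : is_ideal E -> mono_closed E -> G_nice ord J E ->
  ideal_sum J E r -> (forall m, m \in msupp r -> ~ init_ideal ord J 'X_[m]) -> E r.
Proof.
move=> idE closedE nice JEr std.
have [p [q [eq_r Hp Hq]]] := split_poly (fun m => E 'X_[m]) r.
have Ep : E p by apply/closedE => m /Hp [].
case: (eqVneq q 0) => [q0|nzq]; first by rewrite eq_r q0 addr0.
have JEq : ideal_sum J E q.
  have -> : q = r - p by rewrite eq_r addrC addKr.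
  by apply: idealB JEr _; [apply: ideal_sum_ideal|apply: ideal_sum_r].
have [x leadx] := lead_exists Hord nzq.
have [notEx xr] := Hq x (proj1 leadx).
by case: (init_sum_monoP idE closedE nice (lead_in_init JEq nzq leadx)) => [/(std x xr)|].
Qed.

Lemma groebner_sum GJ E : is_ideal E -> mono_closed E -> G_nice ord J E ->
  groebner_basis ord J GJ ->
  groebner_basis ord (ideal_sum J E) (pset_union GJ (min_gens E)).
Proof.
move=> idE closedE nice [finGJ GJJ initJ].
set G := pset_union GJ (min_gens E).
have GJE g : G g -> ideal_sum J E g.
  case=> [/GJJ Jg|[m [Em _] ->]]; [exact: ideal_sum_l|exact: ideal_sum_r].
split => //; first exact: pset_finite_union (min_gens_finite E).
move=> h; split; last first.
  apply: (ideal_gen_min (init_ideal_ideal ord (ideal_sum J E))).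
  by move=> p [g [m [Gg nz leadg ->]]]; apply: lead_in_init leadg => //; apply: GJE.
move/nice => [a [b [Ja Eb ->]]]; apply: (idealD (ideal_gen_ideal _)).
  move/initJ: Ja; apply: ideal_gen_mono => p [g [m [GJg nz leadg ->]]].
  by exists g, m; split => //; left.
apply: (ideal_of_monos (ideal_gen_ideal _)).
move=> m /((init_mono_closed ord E b).1 Eb) /(init_mono_closed_ideal idE closedE) Em.
have [m1 [Em1 le minm1]] := minimal_divisor (P := fun m => E 'X_[m]) Em.
apply: (ideal_monoM (ideal_gen_ideal _) _ le).
apply: ideal_gen_sub; exists 'X_[m1], m1.
by split; [right; exists m1|exact: X_neq0|exact: lead_X (ord_refl Hord) m1|].
Qed.

Variables (L : Type) (Es : L -> pset K n).
Hypothesis idEs : forall i, is_ideal (Es i).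
Hypothesis closedEs : forall i, mono_closed (Es i).
Hypothesis nice : forall i, G_nice ord J (Es i).
Let Ein := ideal_bigcap Es.

(* Part 1: (J, E) is G-nice.  A leading monomial of J + E that is not in
   in(J) lies, by G-niceness of each (J, E i), in every E i. *)
Lemma gnice_bigcap : G_nice ord J Ein.
Proof.
have idEin : is_ideal Ein := bigcap_ideal idEs.
move=> f; split; last first.
  case=> a [b [Ja Eb ->]]; apply: (idealD (init_ideal_ideal _ _)).
  - by apply: init_sub Ja => g; apply: ideal_sum_l.
  - by apply: init_sub Eb => g; apply: ideal_sum_r.
move=> inf; apply: sum_of_monos; try exact: init_mono_closed; try exact: init_ideal_ideal.
move=> m mf; have /init_monoP [m0 [g [JEg nz leadg]] le] := (init_mono_closed _ _ f).1 inf m mf.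
suff [inJ|inE] : init_ideal ord J 'X_[m0] \/ init_ideal ord Ein 'X_[m0].
- by left; apply: ideal_monoM inJ le; apply: init_ideal_ideal.
- by right; apply: ideal_monoM inE le; apply: init_ideal_ideal.
case: (classic (init_ideal ord J 'X_[m0])) => [|notJ]; [by left|right].
apply: (mono_in_init (ord_refl Hord)) => i.
have JEig : ideal_sum J (Es i) g by case: JEg => a [b [Ja Eb ->]]; exists a, b.
by case: (init_sum_monoP (idEs i) (closedEs i) (nice i) (lead_in_init JEig nz leadg)).
Qed.

(* Part 2: ∩ (J + E i) = J + E.  Reduce f to its normal form r modulo J;
   r lies in each J + E i, hence in each E i by the key lemma. *)
Lemma sum_bigcap : pset_eq (ideal_bigcap (fun i => ideal_sum J (Es i))) (ideal_sum J Ein).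
Proof.
move=> f; split; last by case=> a [b [Ja Eb ->]] i; exists a, b.
move=> JEf; have [j [Jj std]] := normal_form Hord HJ f.
exists j, (f - j); split => //; last by rewrite addrC subrK.
move=> i; apply: standard_in_companion => //.
have [a [b [Ja Eb ->]]] := JEf i.
by exists (a - j), b; rewrite addrAC; split => //; apply: idealB.
Qed.

End GNicePairs.

Lemma groebner_basis_ext (K : fieldType) (n : nat) (ord : rel 'X_{1..n}) (I I' G : pset K n) :
  pset_eq I I' -> groebner_basis ord I' G -> groebner_basis ord I G.
Proof.
move=> eqII' [finG GI' initI']; split => // [g /GI'|f]; first by rewrite eqII'.
by rewrite (init_ext ord eqII').
Qed.

Theorem mainTheorem6 (K : fieldType) (n : nat) (ord : rel 'X_{1..n})
  (Hord : monomial_order ord)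
  (J : pset K n) (HJ : is_ideal J)
  (L : Type) (i0 : L) (E : L -> pset K n)
  (HEi : forall i, is_ideal (E i) /\ monomial_ideal (E i))
  (Hnice : forall i, G_nice ord J (E i)) :
  let Einter := ideal_bigcap E in
  [/\ G_nice ord J Einter,
      pset_eq (ideal_bigcap (fun i => ideal_sum J (E i))) (ideal_sum J Einter) &
      forall GJ : pset K n, groebner_basis ord J GJ ->
        groebner_basis ord (ideal_bigcap (fun i => ideal_sum J (E i)))
                       (pset_union GJ (min_gens Einter))].
Proof.
move=> Einter.
have idE i : is_ideal (E i) by case: (HEi i).
have closedE i : mono_closed (E i) by apply: monomial_ideal_closed; case: (HEi i).
have nice_inter : G_nice ord J Einter := gnice_bigcap Hord HJ idE closedE Hnice.
have sum_inter := sum_bigcap Hord HJ idE closedE Hnice.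
split => // GJ groebnerJ; apply: groebner_basis_ext sum_inter _.
apply: groebner_sum => //; first exact: bigcap_ideal.
exact: bigcap_mono_closed.
Qed.
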